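(* Let $a\in\mathbb{C}$ with $|a|\le 1$ and let $m$ be a positive integer. Let $\omega_\pm(\cdot,m)$ be real-analytic functions of $\theta\in\mathbb{R}$ satisfying $$\cos(\omega_\pm(\theta,m))=\begin{cases}|a|^m\cos(m(\theta+\arg a)), & m\text{ odd},\\ -|a|^m\cos(m(\theta+\arg a))+(-1)^{m/2}(|a|^m-1), & m\text{ even}.\end{cases}$$ Then $$\max_{\theta}|\partial_\theta\omega_\pm(\theta,m)|=\begin{cases} m|a|^m, & m\text{ odd},\\ m|a|^{m/2}, & m\text{ even}.\end{cases}$$
   Context: The functions $\omega_\pm(\theta,m)$ are the dispersion relations (eigenphases of the Fourier symbol) of the $m$-th power of an electric shift-coin quantum walk with coin $\begin{bmatrix}a&b\\-\bar b&\bar a\end{bmatrix}$, $|a|^2+|b|^2=1$; analytic choices of these eigenphase functions exist. *)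

From Stdlib Require Import Reals.
From Coquelicot Require Import Coquelicot.
Open Scope R_scope.

Definition real_analytic (f : R -> R) : Prop :=
  forall x : R, exists (c : nat -> R) (r : R), 0 < r /\
    forall y : R, Rabs (y - x) < r -> is_pseries c (y - x) (f y).

(* phi is an argument of a:  a = |a| e^{i phi}  (any phi if a = 0). *)
Definition is_arg (a : C) (phi : R) : Prop :=
  a = (Cmod a * cos phi, Cmod a * sin phi)%R.

Definition cos_omega_rhs (a : C) (phi : R) (m : nat) (theta : R) : R :=
  if Nat.odd m then Cmod a ^ m * cos (INR m * (theta + phi))
  else - (Cmod a ^ m) * cos (INR m * (theta + phi))
       + (-1) ^ (m / 2) * (Cmod a ^ m - 1).

Definition max_speed (a : C) (m : nat) : R :=
  if Nat.odd m then INR m * Cmod a ^ m else INR m * Cmod a ^ (m / 2).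

From Stdlib Require Import Reals Lra Lia.
From Coquelicot Require Import Coquelicot.
Open Scope R_scope.

(* Both parities reduce to a relation sin (f x)^2 = b^2 sin (k x + d)^2 with
   0 <= b <= 1 and f affine in omega: for odd m, f = omega + pi/2, b = |a|^m
   and k = m; for even m the half-angle formulas give f = omega/2 + q,
   b = |a|^(m/2) and k = m/2.  Differentiating the relation yields
   cos(f)^2 f'^2 = b^2 cos(g)^2 k^2, and cos(f)^2 = 1 - b^2 sin(g)^2 >= cos(g)^2
   gives f'^2 <= b^2 k^2, with equality where sin g = 0.  Where sin f or cos f
   vanishes one cannot divide; there the derivatives of two functions of equal
   absolute value, both vanishing at the point, are compared instead. *)

Lemma real_analytic_ex_derive (f : R -> R) :
  real_analytic f -> forall x, ex_derive f x.
Proof.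
  intros Hf x. destruct (Hf x) as (a & r & Hr & Hser).
  assert (Hsum : ex_pseries a (r / 2)).
  { exists (f (x + r / 2)). pose proof (Hser (x + r / 2)) as H.
    replace (x + r / 2 - x) with (r / 2) in H by ring.
    apply H. rewrite Rabs_pos_eq; lra. }
  assert (Hrad : Rbar_lt (Rabs 0) (CV_radius a)).
  { rewrite Rabs_R0. apply Rbar_lt_le_trans with (r / 2); [simpl; lra|].
    apply Rbar_not_lt_le. intros Hlt. apply (CV_disk_outside a (r / 2)).
    - rewrite Rabs_pos_eq by lra. exact Hlt.
    - apply ex_series_lim_0 in Hsum. revert Hsum. apply is_lim_seq_ext.
      intros n. rewrite pow_n_pow. apply Rmult_comm. }
  apply ex_derive_ext_loc with (fun y => PSeries a (y - x)).
  - exists (mkposreal r Hr). intros y Hy. apply is_pseries_unique, Hser, Hy.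
  - apply (ex_derive_comp (PSeries a) (fun y => y - x)).
    + rewrite Rminus_diag. apply ex_derive_PSeries, Hrad.
    + auto_derive. easy.
Qed.

Lemma is_lim_difference_quotient (f : R -> R) (x l : R) :
  is_derive f x l -> is_lim (fun h => (f (x + h) - f x) / h) 0 l.
Proof.
  intros Hf. apply is_derive_Reals in Hf. apply is_lim_spec. intros eps.
  destruct (Hf eps (cond_pos eps)) as [delta Hdelta].
  exists delta. intros h Hh Hh0. apply Hdelta; [exact Hh0|].
  rewrite <- (Rminus_0_r h). exact Hh.
Qed.

Lemma is_derive_sq_eq_at_root (h1 h2 : R -> R) (x l1 l2 : R) :
  h1 x = 0 -> h2 x = 0 -> (forall y, h1 y ^ 2 = h2 y ^ 2) ->
  is_derive h1 x l1 -> is_derive h2 x l2 -> l1 ^ 2 = l2 ^ 2.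
Proof.
  intros H1 H2 H12 D1 D2.
  assert (Habs : forall y, Rabs (h1 y) = Rabs (h2 y)).
  { intros y. apply Rsqr_eq_abs_0. rewrite !Rsqr_pow2. apply H12. }
  apply is_lim_difference_quotient, is_lim_Rabs in D1, D2.
  apply (is_lim_ext _ (fun h => Rabs ((h1 (x + h) - h1 x) / h))) in D2.
  - apply is_lim_unique in D1, D2. rewrite D1 in D2. injection D2 as E.
    now rewrite <- pow2_abs, E, pow2_abs.
  - intros h. rewrite H1, H2. unfold Rdiv.
    now rewrite !Rminus_0_r, !Rabs_mult, Habs.
Qed.

Section SinSqRelation.

Variables (f g : R -> R) (c : R).
Hypothesis f_derivable : forall x, ex_derive f x.
Hypothesis g_derivable : forall x, ex_derive g x.
Hypothesis c_ge0 : 0 <= c.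
Hypothesis c_le1 : c <= 1.
Hypothesis sin_sq_fg : forall x, sin (f x) ^ 2 = c * sin (g x) ^ 2.

Lemma Derive_sin_sq_rel x :
  sin (f x) * cos (f x) * Derive f x = c * (sin (g x) * cos (g x) * Derive g x).
Proof.
  assert (Df : is_derive (fun y => sin (f y) ^ 2) x
                 (2 * (sin (f x) * cos (f x) * Derive f x))).
  { auto_derive; [apply f_derivable|]. change (fun y => f y) with f. ring. }
  assert (Dg : is_derive (fun y => sin (f y) ^ 2) x
                 (2 * (c * (sin (g x) * cos (g x) * Derive g x)))).
  { apply (is_derive_ext (fun y => c * sin (g y) ^ 2)).
    { intros y. now rewrite sin_sq_fg. }
    auto_derive; [apply g_derivable|]. change (fun y => g y) with g. ring. }
  apply is_derive_unique in Df, Dg. lra.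
Qed.

Lemma cos_sq_Derive_sq_rel x :
  cos (f x) ^ 2 * Derive f x ^ 2 = c * (cos (g x) ^ 2 * Derive g x ^ 2).
Proof.
  destruct (Req_dec (sin (f x)) 0) as [Hs | Hs].
  - assert (Dsf : is_derive (fun y => sin (f y)) x (cos (f x) * Derive f x)).
    { auto_derive; [apply f_derivable|]. change (fun y => f y) with f. ring. }
    assert (Dsg : is_derive (fun y => sqrt c * sin (g y)) x
                    (sqrt c * (cos (g x) * Derive g x))).
    { auto_derive; [apply g_derivable|]. change (fun y => g y) with g. ring. }
    assert (Hsq : forall y, sin (f y) ^ 2 = (sqrt c * sin (g y)) ^ 2).
    { intros y. now rewrite Rpow_mult_distr, pow2_sqrt. }
    assert (Hg0 : sqrt c * sin (g x) = 0).
    { assert (E := Hsq x). rewrite Hs in E. nra. }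
    pose proof (is_derive_sq_eq_at_root (fun y => sin (f y)) (fun y => sqrt c * sin (g y))
                  _ _ _ Hs Hg0 Hsq Dsf Dsg) as E.
    rewrite <- Rpow_mult_distr, E, !Rpow_mult_distr, pow2_sqrt; auto.
  - apply Rmult_eq_reg_l with (sin (f x) ^ 2); [| apply pow_nonzero; auto].
    transitivity ((sin (f x) * cos (f x) * Derive f x) ^ 2); [ring|].
    rewrite Derive_sin_sq_rel, sin_sq_fg. ring.
Qed.

Lemma Derive_sq_le x : Derive f x ^ 2 <= c * Derive g x ^ 2.
Proof.
  pose proof (cos_sq_Derive_sq_rel x) as Hrel.
  pose proof (sin_sq_fg x) as Hsq.
  pose proof (sin2_cos2 (f x)) as Pf. pose proof (sin2_cos2 (g x)) as Pg.
  rewrite !Rsqr_pow2 in Pf, Pg.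
  destruct (Req_dec (cos (f x)) 0) as [Hc | Hc].
  - (* Then c = 1, so |cos f| = |cos g| and both vanish at x. *)
    assert (c = 1 /\ sin (g x) ^ 2 = 1) as [-> Hsg] by (rewrite Hc in Pf; nra).
    assert (Dcf : is_derive (fun y => cos (f y)) x (- sin (f x) * Derive f x)).
    { auto_derive; [apply f_derivable|]. change (fun y => f y) with f. ring. }
    assert (Dcg : is_derive (fun y => cos (g y)) x (- sin (g x) * Derive g x)).
    { auto_derive; [apply g_derivable|]. change (fun y => g y) with g. ring. }
    assert (Hcg : cos (g x) = 0) by nra.
    assert (Hcos : forall y, cos (f y) ^ 2 = cos (g y) ^ 2).
    { intros y. pose proof (sin2_cos2 (f y)) as Py. pose proof (sin2_cos2 (g y)) as Qy.
      rewrite !Rsqr_pow2 in Py, Qy. specialize (sin_sq_fg y). lra. }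
    pose proof (is_derive_sq_eq_at_root (fun y => cos (f y)) (fun y => cos (g y))
                  _ _ _ Hc Hcg Hcos Dcf Dcg) as E.
    rewrite !Rpow_mult_distr in E. nra.
  - assert (0 < cos (f x) ^ 2) by (apply pow2_gt_0; exact Hc).
    assert (cos (g x) ^ 2 <= cos (f x) ^ 2) by nra.
    apply Rmult_le_reg_l with (cos (f x) ^ 2); [assumption|].
    assert (0 <= c * Derive g x ^ 2) by (apply Rmult_le_pos; [lra | apply pow2_ge_0]).
    rewrite Hrel. nra.
Qed.

Lemma Derive_sq_eq x : sin (g x) = 0 -> Derive f x ^ 2 = c * Derive g x ^ 2.
Proof.
  intros Hs.
  pose proof (cos_sq_Derive_sq_rel x) as Hrel.
  pose proof (sin_sq_fg x) as Hsq.
  pose proof (sin2_cos2 (f x)) as Pf. pose proof (sin2_cos2 (g x)) as Pg.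
  rewrite !Rsqr_pow2 in Pf, Pg. rewrite Hs in Hsq, Pg.
  assert (cos (f x) ^ 2 = 1) as Cf by nra.
  assert (cos (g x) ^ 2 = 1) as Cg by nra.
  rewrite Cf, Cg in Hrel. lra.
Qed.

End SinSqRelation.

Lemma Rabs_Derive_max_of_sin_sq (w : R -> R) (r q k d b : R) :
  (forall x, ex_derive w x) -> 0 < r -> k <> 0 -> 0 <= b <= 1 ->
  (forall x, sin (w x / r + q) ^ 2 = b ^ 2 * sin (k * x + d) ^ 2) ->
  (exists x0, Rabs (Derive w x0) = b * Rabs k * r) /\
  (forall x, Rabs (Derive w x) <= b * Rabs k * r).
Proof.
  intros Hw Hr Hk Hb Hsin.
  set (f x := w x / r + q). set (g x := k * x + d).
  assert (Df : forall x, is_derive f x (Derive w x / r)).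
  { intros x. unfold f. auto_derive; [apply Hw|].
    change (fun y => w y) with w. field. lra. }
  assert (Dg : forall x, is_derive g x k).
  { intros x. unfold g. auto_derive; [easy | ring]. }
  assert (Hfg : forall x, sin (f x) ^ 2 = b ^ 2 * sin (g x) ^ 2) by exact Hsin.
  assert (Hb2 : 0 <= b ^ 2 <= 1) by (split; nra).
  assert (Hscale : forall x, Rabs (Derive w x) = Rabs (Derive f x) * r).
  { intros x. rewrite (is_derive_unique _ _ _ (Df x)). unfold Rdiv.
    rewrite Rabs_mult, Rabs_inv, (Rabs_pos_eq r) by lra. field. lra. }
  assert (Hbk : forall x, (b * k) ^ 2 = b ^ 2 * Derive g x ^ 2).
  { intros x. rewrite (is_derive_unique _ _ _ (Dg x)). ring. }
  assert (Hf : forall x, ex_derive f x) by (intros x; eexists; apply Df).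
  assert (Hg : forall x, ex_derive g x) by (intros x; eexists; apply Dg).
  split.
  - exists (- d / k). rewrite Hscale.
    assert (Hsq := Derive_sq_eq f g (b ^ 2) Hf Hg ltac:(lra) Hfg (- d / k)).
    rewrite <- Hbk in Hsq.
    assert (Hg0 : sin (g (- d / k)) = 0).
    { unfold g. replace (k * (- d / k) + d) with 0 by (field; exact Hk). apply sin_0. }
    rewrite (Rsqr_eq_abs_0 _ (b * k)), Rabs_mult, (Rabs_pos_eq b); [lra | lra |].
    rewrite !Rsqr_pow2. now apply Hsq.
  - intros x. rewrite Hscale. apply Rmult_le_compat_r; [lra|].
    assert (Hsq := Derive_sq_le f g (b ^ 2) Hf Hg ltac:(lra) ltac:(lra) Hfg x).
    rewrite <- Hbk in Hsq.
    rewrite <- (Rabs_pos_eq b), <- Rabs_mult by lra.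
    apply Rsqr_le_abs_0. now rewrite !Rsqr_pow2.
Qed.

Lemma pow_neg1_cases (n : nat) : (-1) ^ n = 1 \/ (-1) ^ n = -1.
Proof. induction n as [| n [IH | IH]]; simpl; rewrite ?IH; lra. Qed.

Lemma pow_div2_sq (x : R) (m : nat) : Nat.odd m = false -> (x ^ (m / 2)) ^ 2 = x ^ m.
Proof.
  intros Hodd.
  assert (Heven : Nat.Even m) by (apply Nat.even_spec; now rewrite <- Nat.negb_odd, Hodd).
  destruct Heven as [n ->].
  now rewrite Nat.mul_comm, Nat.div_mul, pow_mult by lia.
Qed.

Lemma sin_sq_shift_of_cos_eq (w u b : R) :
  cos w = b * cos u -> sin (w + PI / 2) ^ 2 = b ^ 2 * sin (u + PI / 2) ^ 2.
Proof. intros H. rewrite !(Rplus_comm _ (PI / 2)), <- !cos_sin, H. ring. Qed.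

Lemma sin_sq_half_of_cos_eq (b s : R) : s = 1 \/ s = -1 ->
  exists q d, forall w v, cos w = - b ^ 2 * cos (2 * v) + s * (b ^ 2 - 1) ->
    sin (w / 2 + q) ^ 2 = b ^ 2 * sin (v + d) ^ 2.
Proof.
  intros [-> | ->].
  - exists (PI / 2), 0. intros w v Hw.
    rewrite Rplus_0_r, Rplus_comm, <- cos_sin.
    pose proof (cos_2a_cos (w / 2)) as Hw2.
    replace (2 * (w / 2)) with w in Hw2 by field.
    rewrite cos_2a_sin in Hw. nra.
  - exists 0, (PI / 2). intros w v Hw.
    rewrite Rplus_0_r, (Rplus_comm v), <- cos_sin.
    pose proof (cos_2a_sin (w / 2)) as Hw2.
    replace (2 * (w / 2)) with w in Hw2 by field.
    rewrite cos_2a_cos in Hw. nra.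
Qed.

Theorem lemma3p1 (a : C) (phi : R) (m : nat) (omega : R -> R) :
  Cmod a <= 1 -> is_arg a phi -> (0 < m)%nat ->
  real_analytic omega ->
  (forall theta : R, cos (omega theta) = cos_omega_rhs a phi m theta) ->
  (exists theta0 : R, Rabs (Derive omega theta0) = max_speed a m) /\
  (forall theta : R, Rabs (Derive omega theta) <= max_speed a m).
Proof.
  intros Ha _ Hm Hanalytic Hcos.
  pose proof (real_analytic_ex_derive _ Hanalytic) as Hder.
  pose proof (Cmod_ge_0 a) as Ha0.
  assert (Hm0 : 0 < INR m) by (apply lt_0_INR; lia).
  assert (Hpow : forall n, 0 <= Cmod a ^ n <= 1)
    by (intros n; split; [apply pow_le; lra | rewrite <- (pow1 n); apply pow_incr; lra]).
  unfold max_speed; unfold cos_omega_rhs in Hcos.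
  destruct (Nat.odd m) eqn:Hodd.
  - replace (INR m * Cmod a ^ m) with (Cmod a ^ m * Rabs (INR m) * 1)
      by (rewrite Rabs_pos_eq; lra).
    apply (Rabs_Derive_max_of_sin_sq _ _ (PI / 2) _ (INR m * phi + PI / 2));
      [exact Hder | lra | lra | apply Hpow | intros x].
    rewrite Rdiv_1_r.
    replace (INR m * x + _) with (INR m * (x + phi) + PI / 2) by ring.
    apply sin_sq_shift_of_cos_eq, Hcos.
  - set (b := Cmod a ^ (m / 2)).
    assert (Hb2 : b ^ 2 = Cmod a ^ m) by (apply pow_div2_sq, Hodd).
    destruct (sin_sq_half_of_cos_eq b ((-1) ^ (m / 2))) as (q & d & Hhalf).
    { apply pow_neg1_cases. }
    replace (INR m * b) with (b * Rabs (INR m / 2) * 2)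
      by (rewrite Rabs_pos_eq; lra).
    apply (Rabs_Derive_max_of_sin_sq _ _ q _ (INR m / 2 * phi + d));
      [exact Hder | lra | lra | apply Hpow | intros x].
    replace (INR m / 2 * x + _) with (INR m / 2 * (x + phi) + d) by ring.
    apply Hhalf. rewrite Hcos, Hb2.
    now replace (2 * (INR m / 2 * (x + phi))) with (INR m * (x + phi)) by field.
Qed.
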